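(* Let $T\ge 1$ and $d$ be integers with $d>2T+1$, and let $n=T+1$. For every deterministic algorithm that interacts for $T$ rounds with a one-sided oracle and then outputs a vector $\mathbf{w}_{T+1}\in\mathbb{R}^d$, there exists a matrix $A\in\mathbb{R}^{(T+1)\times d}$ such that \[ \max_{l\in[T+1]}\|A_l\|_2=1\qquad\text{and}\qquad \max_{\mathbf{w}\in\mathbb{R}^d:\|\mathbf{w}\|_2\le 1}\ \min_{\mathbf{p}\in\Delta^{n-1}}\mathbf{p}^\top A\mathbf{w}\ \ge\ \frac{1}{\sqrt{T+1}}, \] yet the output of the algorithm after $T$ rounds of interaction with $\mathcal{O}_1^A$ satisfies $\min_{\mathbf{p}\in\Delta^{n-1}}\mathbf{p}^\top A\mathbf{w}_{T+1}\le 0$.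
   Context: $\Delta^{n-1}=\{\mathbf{p}\in\mathbb{R}^n:\ p_i\ge 0\ \forall i,\ \sum_i p_i=1\}$ is the probability simplex; $A_l$ denotes the $l$-th row of $A$; $[n]=\{1,\dots,n\}$. The one-sided oracle $\mathcal{O}_1^A$: given a query $(l,\mathbf{w})\in[n]\times\mathbb{R}^d$, it returns $A\mathbf{w}$ and the row $A_l$. A deterministic algorithm interacting with the oracle for $T$ rounds chooses, at each round $t=1,\dots,T$, a query $(l_t,\mathbf{w}_t)$ as a deterministic function of the oracle responses received in rounds $1,\dots,t-1$, and after round $T$ outputs $\mathbf{w}_{T+1}\in\mathbb{R}^d$ as a deterministic function of all $T$ responses. Queries are not restricted to the unit ball. *)

From HB Require Import structures.
From mathcomp Require Import all_boot all_order all_algebra.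
From mathcomp Require Import reals.
Set Implicit Arguments. Unset Strict Implicit. Unset Printing Implicit Defensive.
Import Order.TTheory GRing.Theory Num.Theory.
Local Open Scope ring_scope.

Section Defs.
Variable R : realType.

Definition rnorm2 d (v : 'rV[R]_d) : R := Num.sqrt (\sum_(j < d) v 0 j ^+ 2).
Definition cnorm2 d (v : 'cV[R]_d) : R := Num.sqrt (\sum_(j < d) v j 0 ^+ 2).

Definition max_row_norm n d (A : 'M[R]_(n, d)) : R :=
  \big[Num.max/0]_(l < n) rnorm2 (row l A).

Definition in_simplex n (p : 'cV[R]_n) : Prop :=
  (forall i, 0 <= p i 0) /\ \sum_(i < n) p i 0 = 1.

Definition bilin n d (p : 'cV[R]_n) (A : 'M[R]_(n, d)) (w : 'cV[R]_d) : R :=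
  (p^T *m A *m w) 0 0.

Definition response n d := ('cV[R]_n * 'rV[R]_d)%type.
Definition query n d := ('I_n * 'cV[R]_d)%type.

Definition oracle1 n d (A : 'M[R]_(n, d)) (q : query n d) : response n d :=
  (A *m q.2, row q.1 A).

(* A deterministic algorithm: the query of round t is a function of the
   list of responses of rounds 1..t-1; the output is a function of the
   list of all T responses. *)
Record algorithm n d := Algorithm {
  alg_query : seq (response n d) -> query n d;
  alg_output : seq (response n d) -> 'cV[R]_d }.

Fixpoint history n d (alg : algorithm n d) (A : 'M[R]_(n, d)) (k : nat)
  : seq (response n d) :=
  match k with
  | 0 => [::]
  | k'.+1 => let h := history alg A k' in
             rcons h (oracle1 A (alg_query alg h))
  end.

Definition run_output n d (alg : algorithm n d) (A : 'M[R]_(n, d)) (T : nat)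
  : 'cV[R]_d := alg_output alg (history alg A T).

End Defs.

(* A resisting oracle.  The adversary answers with a partial matrix whose zero
   rows are still hidden; a hidden row answers 0 to every product query.  When
   the algorithm asks for row l for the first time, that row is revealed as a
   unit vector orthogonal to the rows revealed so far and to every vector
   queried so far, the current one included.  Hence every later choice of
   rows orthogonal to all the queried vectors is consistent with all answers.
   After T < n rounds some row l is still hidden; it is revealed as +-f, f a
   unit vector orthogonal to the queries and the revealed rows, with the sign
   chosen so that <row l, w_(T+1)> <= 0, and the remaining hidden rows are
   filled in the same way.  Each step needs a unit vector orthogonal to at most
   T + n vectors, which exists because T + n < d.  The resulting A has
   orthonormal rows: every row has norm 1, w = A^T 1 / sqrt n is a unit vector
   with p^T A w = 1 / sqrt n on the whole simplex, and the point mass on row l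
   certifies that the output has margin at most 0. *)

From HB Require Import structures.
From mathcomp Require Import all_boot all_order all_algebra.
From mathcomp Require Import reals.
From mathcomp Require Import zify.
From Stdlib Require Import ClassicalEpsilon.
Import Order.TTheory GRing.Theory Num.Theory.
Local Open Scope ring_scope.
Set Implicit Arguments. Unset Strict Implicit. Unset Printing Implicit Defensive.

Lemma mulmx_trE (R : pzSemiRingType) m n d (M : 'M[R]_(m, d)) (N : 'M[R]_(n, d)) i j :
  (M *m N^T) i j = (row i M *m (row j N)^T) 0 0.
Proof. by rewrite !mxE; apply: eq_bigr => k _; rewrite !mxE. Qed.

Section UnitOrthogonal.
Variable R : rcfType.

Lemma dotmx_self_gt0 d (v : 'rV[R]_d) : v != 0 -> 0 < (v *m v^T) 0 0.
Proof.
move=> v_nz; have v2E : (v *m v^T) 0 0 = \sum_j v 0 j ^+ 2.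
  by rewrite mxE; apply: eq_bigr => j _; rewrite mxE expr2.
rewrite v2E lt_def sumr_ge0 ?andbT // => [|j _]; last exact: sqr_ge0.
apply: contra v_nz => /eqP v2_0; apply/eqP/rowP => j; rewrite mxE.
apply/eqP; rewrite -sqrf_eq0; apply/eqP.
by apply: (psumr_eq0P _ v2_0) => // i _; exact: sqr_ge0.
Qed.

Lemma exists_unit_orthogonal m d (W : 'M[R]_(m, d)) : (m < d)%N ->
  exists v : 'rV[R]_d, v *m v^T = 1%:M /\ W *m v^T = 0.
Proof.
move=> lt_md; have : kermx W^T != 0.
  by rewrite -mxrank_eq0 mxrank_ker mxrank_tr; have := rank_leq_row W; lia.
case/rowV0Pn => v /sub_kermxP vW v_nz.
have Wv : W *m v^T = 0 by rewrite -[W]trmxK -trmx_mul vW trmx0.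
have s_gt0 := dotmx_self_gt0 v_nz; set s := (v *m v^T) 0 0 in s_gt0.
exists ((Num.sqrt s)^-1 *: v); split; last by rewrite linearZ -scalemxAr Wv scaler0.
rewrite linearZ -scalemxAr -scalemxAl scalerA -expr2 exprVn sqr_sqrtr ?ltW //.
by rewrite [v *m _]mx11_scalar -/s scale_scalar_mx mulVf ?gt_eqF.
Qed.

End UnitOrthogonal.

Section PartialMatrix.
Variables (R : realType) (n d : nat).
Implicit Types (M A : 'M[R]_(n, d)) (ws : seq 'cV[R]_d) (v : 'rV[R]_d).

Definition unit_orthogonal ws M v :=
  [/\ v *m v^T = 1%:M, {in ws, forall w, v *m w = 0} & M *m v^T = 0].

(* An arbitrary vector when [size ws + n >= d] leaves no room. *)
Definition fresh ws M : 'rV[R]_d := epsilon (inhabits 0) (unit_orthogonal ws M).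

Lemma fresh_spec ws M : (size ws + n < d)%N -> unit_orthogonal ws M (fresh ws M).
Proof.
move=> hws; apply: epsilon_spec.
pose W : 'M[R]_(size ws, d) := \matrix_(i < size ws) (nth 0 ws i)^T.
have [v [vv /eqP]] := exists_unit_orthogonal (col_mx W M) hws.
rewrite mul_col_mx col_mx_eq0 => /andP[/eqP Wv /eqP Mv].
exists v; split=> // _ /(nthP 0)[i lt_i <-].
have := congr1 (row (Ordinal lt_i)) Wv; rewrite row_mul rowK row0 => /(congr1 trmx).
by rewrite trmx_mul !trmxK trmx0.
Qed.

Lemma fresh_neq0 ws M : (size ws + n < d)%N -> fresh ws M != 0.
Proof.
move=> /(fresh_spec M)[ff _ _]; apply/eqP => f0.
by move: ff; rewrite f0 mul0mx => /matrixP/(_ 0 0)/eqP; rewrite !mxE eq_sym oner_eq0.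
Qed.

(* A zero row of a partial matrix stands for a row that is not revealed yet. *)
Definition reveal_row (s : R) ws M (l : 'I_n) : 'M[R]_(n, d) :=
  if row l M == 0 then \matrix_i (if i == l then s *: fresh ws M else row i M) else M.

Lemma row_reveal s ws M l i : row i (reveal_row s ws M l) =
  if (i == l) && (row l M == 0) then s *: fresh ws M else row i M.
Proof.
rewrite /reveal_row; case: (row l M == 0); rewrite ?andbT ?andbF // rowK.
by case: eqP.
Qed.

Lemma row_reveal_id s ws M l i : row i M != 0 -> row i (reveal_row s ws M l) = row i M.
Proof. by move=> nz; rewrite row_reveal; case: (i =P l) nz => //= -> /negPf ->. Qed.

Lemma row_reveal_neq0 s ws M l i : (size ws + n < d)%N -> s != 0 ->
  (i == l) || (row i M != 0) -> row i (reveal_row s ws M l) != 0.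
Proof.
move=> hws s_nz /orP[/eqP ->|nz]; last by rewrite row_reveal_id.
rewrite row_reveal eqxx /=; case: (row l M =P 0) => [_|/eqP //].
by rewrite scaler_eq0 negb_or s_nz fresh_neq0.
Qed.

Definition partial_orthonormal M := forall i j,
  row i M *m (row j M)^T = ((i == j) && (row i M != 0))%:R%:M.

Lemma partial_orthonormal0 : partial_orthonormal 0.
Proof. by move=> i j; rewrite row0 mul0mx eqxx andbF raddf0. Qed.

Lemma partial_orthonormal_reveal s ws M l : s ^+ 2 = 1 -> (size ws + n < d)%N ->
  partial_orthonormal M -> partial_orthonormal (reveal_row s ws M l).
Proof.
move=> s2 hws oM; have [ff _ Mf] := fresh_spec M hws; set f := fresh ws M in ff Mf *.
have rowMf j : row j M *m f^T = 0 by rewrite -row_mul Mf row0.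
have fMrow j : f *m (row j M)^T = 0 by rewrite -[f]trmxK -trmx_mul rowMf trmx0.
have s_nz : s != 0 by rewrite -sqrf_eq0 s2 oner_neq0.
have f_nz : s *: f != 0 by rewrite scaler_eq0 negb_or s_nz fresh_neq0.
move=> i j; rewrite !row_reveal -/f.
case Ei: ((i == l) && _); case Ej: ((j == l) && _).
- move: Ei Ej => /andP[/eqP -> _] /andP[/eqP -> _].
  by rewrite eqxx f_nz -scalemxAl linearZ -scalemxAr ff scalerA -expr2 s2 scale1r.
- rewrite -scalemxAl fMrow scaler0; case: eqVneq => [eij|_]; last by rewrite raddf0.
  by move: Ei Ej; rewrite eij => ->.
- rewrite linearZ /= -scalemxAr rowMf scaler0; case: eqVneq => [eij|_]; last by rewrite raddf0.
  by move: Ei Ej; rewrite eij => ->.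
- exact: oM.
Qed.

Lemma mulmx_tr_orthonormal M : partial_orthonormal M -> (forall i, row i M != 0) ->
  M *m M^T = 1%:M.
Proof.
by move=> oM M_nz; apply/matrixP => i j; rewrite mulmx_trE oM M_nz andbT !mxE.
Qed.

Definition completes ws M A := forall i,
  if row i M == 0 then {in ws, forall w, row i A *m w = 0} else row i A = row i M.

Lemma completes_refl ws M : completes ws M M.
Proof. by move=> i; case: eqP => // -> w _; rewrite mul0mx. Qed.

Lemma completes_trans ws ws' M M' A : {subset ws <= ws'} ->
  completes ws M M' -> completes ws' M' A -> completes ws M A.
Proof.
move=> sub_ws MM' M'A i; move: (MM' i) (M'A i).
case: ifP => [_ hM'|M_nz hM']; last by rewrite hM' M_nz.
case: ifP => [_ hA w w_ws|_ ->]; [exact/hA/sub_ws | exact: hM'].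
Qed.

Lemma completes_reveal s ws M l : (size ws + n < d)%N ->
  completes ws M (reveal_row s ws M l).
Proof.
move=> hws i; have [_ fws _] := fresh_spec M hws; rewrite row_reveal.
case: ifP => [/eqP -> w w_ws|]; last by case: (i =P l) => //= -> ->.
by case: (_ && _); rewrite ?mul0mx // -scalemxAl fws ?scaler0.
Qed.

Lemma oracle1_completes ws M A l w : completes ws M A -> w \in ws -> row l M != 0 ->
  oracle1 A (l, w) = oracle1 M (l, w).
Proof.
move=> MA w_ws M_nz; rewrite /oracle1 /=; have := MA l; rewrite (negPf M_nz) => ->.
congr pair; apply/row_matrixP => i; rewrite !row_mul; have := MA i.
by case: ifP => [/eqP -> /(_ w w_ws) ->|_ ->]; rewrite ?mul0mx.
Qed.

Lemma revealed_reveal s ws M l :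
  [set i | row i (reveal_row s ws M l) != 0] \subset l |: [set i | row i M != 0].
Proof.
apply/subsetP => i; rewrite !inE row_reveal.
by case: (i =P l) => //= _ ->.
Qed.

Definition reveal_rows ws M (ls : seq 'I_n) :=
  foldl (fun M l => reveal_row 1 ws M l) M ls.

Lemma partial_orthonormal_reveal_rows ws M ls : (size ws + n < d)%N ->
  partial_orthonormal M -> partial_orthonormal (reveal_rows ws M ls).
Proof.
move=> hws; elim: ls M => [//|l ls IH] M oM /=.
by apply/IH/partial_orthonormal_reveal; rewrite ?expr1n.
Qed.

Lemma completes_reveal_rows ws M ls : (size ws + n < d)%N ->
  completes ws M (reveal_rows ws M ls).
Proof.
move=> hws; elim: ls M => [|l ls IH] M /=; first exact: completes_refl.
exact: completes_trans (completes_reveal _ _ _ hws) (IH _).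
Qed.

Lemma row_reveal_rows_id ws M ls i : row i M != 0 ->
  row i (reveal_rows ws M ls) = row i M.
Proof.
elim: ls M => [//|l ls IH] M M_nz /=.
by rewrite IH row_reveal_id.
Qed.

Lemma row_reveal_rows_neq0 ws M ls i : (size ws + n < d)%N ->
  (i \in ls) || (row i M != 0) -> row i (reveal_rows ws M ls) != 0.
Proof.
move=> hws; elim: ls M => [|l ls IH] M; first by rewrite in_nil.
rewrite in_cons => i_new; apply: IH; case: (i \in ls) i_new; rewrite ?orbT //= orbF.
by move=> i_new; rewrite row_reveal_neq0 ?oner_eq0.
Qed.

End PartialMatrix.

Section OrthonormalRows.
Variables (R : realType) (m d : nat).
Local Notation n := m.+1.
Implicit Types (A : 'M[R]_(n, d)) (p : 'cV[R]_n) (w : 'cV[R]_d).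

Lemma rnorm2E (v : 'rV[R]_d) : rnorm2 v = Num.sqrt ((v *m v^T) 0 0).
Proof. by rewrite mxE; congr Num.sqrt; apply: eq_bigr => j _; rewrite mxE expr2. Qed.

Lemma cnorm2E w : cnorm2 w = Num.sqrt ((w^T *m w) 0 0).
Proof. by rewrite mxE; congr Num.sqrt; apply: eq_bigr => j _; rewrite mxE expr2. Qed.

Lemma max_row_norm_orthonormal A : A *m A^T = 1%:M -> max_row_norm A = 1.
Proof.
move=> AAT; have row_norm1 l : rnorm2 (row l A) = 1.
  by rewrite rnorm2E -mulmx_trE AAT mxE eqxx sqrtr1.
rewrite /max_row_norm (eq_bigr (fun=> 1)) //; apply/eqP.
by rewrite eq_le bigmax_le ?ler01 //= big_ord_recl le_max lexx.
Qed.

Local Notation ones := (const_mx 1 : 'cV[R]_n).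

Lemma simplex_sum1 p : in_simplex p -> p^T *m ones = 1.
Proof.
move=> [_ p1]; apply/matrixP => i j; rewrite !ord1 [RHS]mxE /= -[RHS]p1 mxE.
by apply: eq_bigr => k _; rewrite !mxE mulr1.
Qed.

Lemma orthonormal_margin A : A *m A^T = 1%:M ->
  exists w, cnorm2 w <= 1 /\
    forall p, in_simplex p -> 1 / Num.sqrt n%:R <= bilin p A w.
Proof.
move=> AAT; have n_gt0 : (0 : R) < n%:R by rewrite ltr0n.
set c := (Num.sqrt n%:R)^-1.
have AATw : A *m (A^T *m ones) = ones by rewrite mulmxA AAT mul1mx.
exists (c *: (A^T *m ones)); split.
  rewrite cnorm2E !linearZ /= -scalemxAl scalerA -expr2 trmx_mul trmxK.
  rewrite -mulmxA AATw !mxE (eq_bigr (fun=> 1)) => [|k _]; last by rewrite !mxE mulr1.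
  by rewrite sumr_const card_ord /c exprVn (sqr_sqrtr (ltW n_gt0)) mulVf ?gt_eqF // sqrtr1.
move=> p p_simplex; rewrite /bilin -scalemxAr -mulmxA AATw simplex_sum1 //.
by rewrite !mxE mulr1 mul1r.
Qed.

End OrthonormalRows.

Lemma in_simplex_delta (R : realType) n (l : 'I_n) : in_simplex (delta_mx l 0 : 'cV[R]_n).
Proof.
split=> [i|]; first by rewrite mxE ler0n.
by rewrite (bigD1 l) //= big1 ?mxE ?eqxx ?addr0 // => i /negPf ne; rewrite mxE ne.
Qed.

Lemma bilin_delta (R : realType) n d (A : 'M[R]_(n, d)) (l : 'I_n) w :
  bilin (delta_mx l 0) A w = (row l A *m w) 0 0.
Proof. by rewrite /bilin trmx_delta -rowE. Qed.

Section Adversary.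
Variables (R : realType) (n d : nat) (alg : algorithm R n d).

Record adversary_state := AdversaryState {
  adv_history : seq (response R n d);
  adv_matrix : 'M[R]_(n, d);
  adv_queried : seq 'cV[R]_d }.

Definition adversary_step st :=
  let q := alg_query alg (adv_history st) in
  let ws := rcons (adv_queried st) q.2 in
  let M := reveal_row 1 ws (adv_matrix st) q.1 in
  AdversaryState (rcons (adv_history st) (oracle1 M q)) M ws.

Fixpoint adversary k :=
  if k is k'.+1 then adversary_step (adversary k') else AdversaryState [::] 0 [::].

Local Notation hist k := (adv_history (adversary k)).
Local Notation mat k := (adv_matrix (adversary k)).
Local Notation queried k := (adv_queried (adversary k)).

Lemma size_queried k : size (queried k) = k.
Proof. by elim: k => //= k IH; rewrite size_rcons IH. Qed.

Lemma queried_subset j k : (j <= k)%N -> {subset queried j <= queried k}.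
Proof.
move=> /subnK <-; elim: (k - j)%N => // i IH w /IH w_i.
by rewrite addSn /= mem_rcons in_cons w_i orbT.
Qed.

Lemma partial_orthonormal_adversary k : (k + n < d)%N ->
  partial_orthonormal (mat k).
Proof.
elim: k => [_|k IH hk] /=; first exact: partial_orthonormal0.
apply: partial_orthonormal_reveal; first exact: expr1n.
  by rewrite size_rcons size_queried.
by apply: IH; lia.
Qed.

Lemma completes_adversary j k : (j <= k)%N -> (k + n < d)%N ->
  completes (queried j) (mat j) (mat k).
Proof.
move=> /subnK <-; elim: (k - j)%N => [_|i IH hk]; first exact: completes_refl.
rewrite addSn; apply: (@completes_trans _ _ _ _ (queried (i + j).+1)).
- by apply: queried_subset; rewrite leqW ?leq_addl.
- by apply: IH; lia.
- by apply: completes_reveal; rewrite size_rcons size_queried.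
Qed.

Lemma card_revealed k : (#|[set i | row i (mat k) != 0%R]| <= k)%N.
Proof.
elim: k => [|k IH] /=.
  by rewrite leqn0 cards_eq0; apply/eqP/setP => i; rewrite !inE row0 eqxx.
apply: leq_trans (subset_leq_card (revealed_reveal _ _ _ _)) _.
by rewrite cardsU1 (leq_add (leq_b1 _) IH).
Qed.

Lemma exists_hidden_row k : (k < n)%N -> exists l, row l (mat k) = 0.
Proof.
move=> lt_kn; have [l /eqP|all_nz] := pickP (fun l => row l (mat k) == 0).
  by exists l.
have : [set i | row i (mat k) != 0] = setT by apply/setP => i; rewrite !inE all_nz.
by move: (card_revealed k) => /[swap] ->; rewrite cardsT card_ord leqNgt lt_kn.
Qed.

Lemma history_adversary T A : (T + n < d)%N -> completes (queried T) (mat T) A ->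
  forall k, (k <= T)%N -> history alg A k = hist k.
Proof.
move=> hT TA; elim=> [//|k IH lt_kT] /=; rewrite IH 1?ltnW //; congr rcons.
have hk : (size (queried k.+1) + n < d)%N by rewrite size_queried; lia.
rewrite [alg_query _ _]surjective_pairing.
apply: (oracle1_completes (ws := queried k.+1)).
- exact: completes_trans (queried_subset lt_kT) (completes_adversary lt_kT hT) TA.
- by rewrite mem_rcons mem_head.
- by apply: row_reveal_neq0; rewrite ?oner_eq0 ?eqxx.
Qed.

Lemma resisting_matrix T : (T < n)%N -> (T + n < d)%N ->
  exists A : 'M[R]_(n, d), A *m A^T = 1%:M /\
    exists p : 'cV[R]_n, in_simplex p /\ bilin p A (run_output alg A T) <= 0.
Proof.
move=> lt_Tn hT; have [l Ml0] := exists_hidden_row lt_Tn.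
set M := mat T; set ws := queried T; set wout := alg_output alg (hist T).
have hws : (size ws + n < d)%N by rewrite size_queried.
set f := fresh ws M; set s : R := if 0 < (f *m wout) 0 0 then -1 else 1.
have s2 : s ^+ 2 = 1 by rewrite /s; case: ifP; rewrite ?sqrrN expr1n.
pose A := reveal_rows ws (reveal_row s ws M l) (enum 'I_n).
have oA : partial_orthonormal A.
  apply: partial_orthonormal_reveal_rows => //.
  exact: partial_orthonormal_reveal (partial_orthonormal_adversary _).
have A_nz i : row i A != 0 by apply: row_reveal_rows_neq0; rewrite ?mem_enum.
have MA : completes ws M A.
  exact: completes_trans (completes_reveal _ _ _ hws) (completes_reveal_rows _ _ hws).
have s_nz : s != 0 by rewrite -sqrf_eq0 s2 oner_neq0.
have l_nz : row l (reveal_row s ws M l) != 0 by rewrite row_reveal_neq0 ?eqxx.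
have Al : row l A = s *: f by rewrite row_reveal_rows_id // row_reveal eqxx Ml0 eqxx.
exists A; split; first exact: mulmx_tr_orthonormal.
exists (delta_mx l 0); split; first exact: in_simplex_delta.
rewrite bilin_delta /run_output (history_adversary hT MA) // -/wout Al -scalemxAl mxE.
by rewrite /s; case: ifP => [/ltW|/negbT]; rewrite ?mulN1r ?oppr_le0 ?mul1r // -leNgt.
Qed.

End Adversary.

Theorem theorem1 (R : realType) (T d : nat) (hT : (1 <= T)%N)
  (hd : (2 * T + 1 < d)%N) (alg : algorithm R T.+1 d) :
  exists A : 'M[R]_(T.+1, d),
    max_row_norm A = 1 /\
    (exists w : 'cV[R]_d, cnorm2 w <= 1 /\
       forall p : 'cV[R]_T.+1, in_simplex p ->
         1 / Num.sqrt (T.+1)%:R <= bilin p A w) /\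
    (exists p : 'cV[R]_T.+1, in_simplex p /\
       bilin p A (run_output alg A T) <= 0).
Proof.
have [|A [AAT resist]] := @resisting_matrix R T.+1 d alg T (ltnSn T); first lia.
by exists A; split; [exact: max_row_norm_orthonormal | split; first exact: orthonormal_margin].
Qed.
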